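(* Let $G$ be a graph, $k\ge1$, and $S,T$ independent sets of $G$ of size $k$. Let $\mathcal{F}$ be a family of independent sets of $G$, each of size at least $k$, with $S,T\in\mathcal{F}$. Let $\mathcal{G}$ be the graph with vertex set $\mathcal{F}$ in which distinct $I,I'\in\mathcal{F}$ are adjacent iff $|I\cap I'|\ge k-1$. If there is a path from $S$ to $T$ in $\mathcal{G}$, then there is a token jumping reconfiguration sequence from $S$ to $T$ in $G$.
   Context: A token jumping reconfiguration sequence from $S$ to $T$ is a finite sequence $S=I_0,\dots,I_m=T$ of independent sets of $G$ of size $k$ with each $I_{j+1}=(I_j\setminus\{u\})\cup\{v\}$ for some $u\in I_j$, $v\in V(G)\setminus I_j$. In the paper, $\mathcal{F}$ is obtained from an independence covering family for $(G,k)$ by deleting the members of size less than $k$ and adding $S$ and $T$. *)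

From mathcomp Require Import all_boot.
Set Implicit Arguments. Unset Strict Implicit. Unset Printing Implicit Defensive.

(* A (finite simple) graph on vertex type V is given by an adjacency relation
   e : rel V, assumed symmetric and irreflexive in the theorem. *)

Definition independent (V : finType) (e : rel V) (A : {set V}) : bool :=
  [forall x in A, forall y in A, ~~ e x y].

Definition tj_step (V : finType) (I J : {set V}) : Prop :=
  exists u v, [/\ u \in I, v \notin I & J = (I :\ u) :|: [set v]].

Definition tj_reconf (V : finType) (e : rel V) (k : nat) (S T : {set V}) : Prop :=
  exists s : seq {set V},
    [/\ last S s = T,
        (forall I, I \in S :: s -> independent e I /\ #|I| = k) &
        (forall i, i < size s -> tj_step (nth S (S :: s) i) (nth S (S :: s) i.+1))].

Definition aux_adj (V : finType) (k : nat) (I J : {set V}) : bool :=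
  (I != J) && (k.-1 <= #|I :&: J|).

From mathcomp Require Import all_boot zify.
Set Implicit Arguments. Unset Strict Implicit. Unset Printing Implicit Defensive.

(* Two k-subsets X, Y of one independent set J are linked by token jumps that
   stay inside J: move the tokens of X \ Y to Y \ X one at a time.  Along an
   edge I -- I' of the auxiliary graph, fix A in I :&: I' of size k - 1 and
   x in I \ A, y in I' \ A; then x |: A and y |: A differ by a single jump.
   Chaining these moves along the path from S to T gives the sequence. *)

Section TokenJumping.

Variables (V : finType) (e : rel V) (k : nat).

Lemma independentS (A B : {set V}) :
  A \subset B -> independent e B -> independent e A.
Proof.
move=> sAB /forall_inP indB; apply/forall_inP => x xA; apply/forall_inP => y yA.
by have /forall_inP := indB x (subsetP sAB x xA); apply; apply: (subsetP sAB).
Qed.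

Lemma subset_card_exists (C : {set V}) n :
  n <= #|C| -> exists2 B : {set V}, B \subset C & #|B| = n.
Proof.
move=> le_nC; exists [set x in take n (enum C)].
  by apply/subsetP => x; rewrite inE => /mem_take; rewrite mem_enum.
by rewrite cardsE (card_uniqP _) ?take_uniq ?enum_uniq // size_takel // -cardE.
Qed.

Lemma card_exchange (X : {set V}) u v :
  u \in X -> v \notin X -> #|X :\ u :|: [set v]| = #|X|.
Proof.
move=> uX vX; rewrite setUC cardsU1 in_setD1 (negbTE vX) andbF.
by rewrite [in RHS](cardsD1 u) uX.
Qed.

Lemma setD_exchange (X Y : {set V}) u v :
  v \in Y -> (X :\ u :|: [set v]) :\: Y = (X :\: Y) :\ u.
Proof.
move=> vY; apply/setP => z; rewrite !inE.
by case: (eqVneq z v) => [->|_]; rewrite ?vY /= ?andbF ?orbF // andbCA.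
Qed.

Lemma eq_setD0_card (X Y : {set V}) : #|X :\: Y| = 0 -> #|X| = #|Y| -> X = Y.
Proof.
move=> /eqP; rewrite cards_eq0 setD_eq0 => sXY cXY.
by apply/eqP; rewrite eqEcard sXY cXY leqnn.
Qed.

(* Boolean, and checking the invariant on the target, so that connect and pathP
   produce a reconfiguration sequence directly. *)
Definition tj_move : rel {set V} := fun X Y =>
  [&& independent e Y, #|Y| == k &
      [exists u in X, exists v in ~: X, Y == X :\ u :|: [set v]]].

Lemma tj_reconf_connect (X Y : {set V}) :
  independent e X -> #|X| = k -> connect tj_move X Y -> tj_reconf e k X Y.
Proof.
move=> indX cX /connectP [p /(pathP X) move_p ->]; exists p; split=> //.
  move=> I /predU1P [-> // | /(nthP X) [i lt_ip <-]].
  by have /and3P [indI /eqP cI _] := move_p i lt_ip.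
move=> i lt_ip /=; have /and3P [_ _ /exists_inP [u uI /exists_inP [v]]] := move_p i lt_ip.
by rewrite inE => vI /eqP ->; exists u, v.
Qed.

Lemma connect_tj_move_within (J X Y : {set V}) :
  independent e J -> X \subset J -> Y \subset J -> #|X| = k -> #|Y| = k ->
  connect tj_move X Y.
Proof.
move=> indJ + sYJ + cY; move dXY: #|X :\: Y| => n.
elim: n X dXY => [|n IHn] X dXY sXJ cX.
  by rewrite (eq_setD0_card dXY) ?cX ?cY.
have neXY : X != Y by apply/eqP => eXY; move: dXY; rewrite eXY setDv cards0.
have /subsetPn [u uX uY] : ~~ (X \subset Y).
  by apply: contra neXY => sXY; rewrite eqEcard sXY cX cY leqnn.
have /subsetPn [v vY vX] : ~~ (Y \subset X).
  by apply: contra neXY => sYX; rewrite eq_sym eqEcard sYX cX cY leqnn.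
set X' := X :\ u :|: [set v].
have sX'J : X' \subset J.
  by rewrite subUset sub1set (subsetP sYJ) // andbT (subset_trans (subD1set _ _)).
have cX' : #|X'| = k by rewrite card_exchange.
apply: (connect_trans (connect1 (_ : tj_move X X'))).
  rewrite /tj_move (independentS sX'J indJ) cX' eqxx /=.
  by apply/exists_inP; exists u => //; apply/exists_inP; exists v; rewrite ?inE.
apply: IHn => //; move: dXY; rewrite setD_exchange // (cardsD1 u (X :\: Y)).
by rewrite !inE uX uY => -[].
Qed.

Lemma connect_tj_move_across (I I' X : {set V}) :
  0 < k -> independent e I -> independent e I' ->
  k.-1 <= #|I :&: I'| -> k <= #|I'| -> X \subset I -> #|X| = k ->
  exists Z : {set V}, [/\ Z \subset I', #|Z| = k & connect tj_move X Z].
Proof.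
move=> k_gt0 indI indI' capII' kI' sXI cX.
have [A sA cA] := subset_card_exists capII'.
have [sAI sAI'] : A \subset I /\ A \subset I'.
  by split; apply: (subset_trans sA); rewrite ?subsetIl ?subsetIr.
have kI : k <= #|I| by rewrite -cX subset_leq_card.
have /properP [_ [x xI xA]] : A \proper I by rewrite properEcard sAI cA; lia.
have /properP [_ [y yI' yA]] : A \proper I' by rewrite properEcard sAI' cA; lia.
have sxAI : x |: A \subset I by rewrite subUset sub1set xI.
have syAI' : y |: A \subset I' by rewrite subUset sub1set yI'.
have card_xA z : z \notin A -> #|z |: A| = k by move=> zA; rewrite cardsU1 zA cA; lia.
exists (y |: A); split; rewrite ?card_xA //.
apply: (connect_trans (connect_tj_move_within indI sXI sxAI cX (card_xA x xA))).
have [<- | neyx] := eqVneq y x; first exact: connect0.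
apply: connect1; rewrite /tj_move (independentS syAI' indI') card_xA // eqxx /=.
apply/exists_inP; exists x; first exact: setU11.
apply/exists_inP; exists y; first by rewrite !inE negb_or neyx.
by rewrite setU1K // setUC.
Qed.

Lemma connect_tj_move_path (F : {set {set V}}) :
  0 < k -> (forall I, I \in F -> independent e I /\ k <= #|I|) ->
  forall J p, J \in F -> all [in F] p -> path (@aux_adj V k) J p ->
  forall X Y : {set V}, X \subset J -> #|X| = k -> Y \subset last J p -> #|Y| = k ->
  connect tj_move X Y.
Proof.
move=> k_gt0 hF J p; elim: p J => [|J' p IHp] J FJ /=.
  move=> _ _ X Y sXJ cX sYJ cY; exact: (connect_tj_move_within (hF J FJ).1 sXJ sYJ).
case/andP=> FJ' Fp /andP [/andP [_ capJJ'] pathJ'] X Y sXJ cX sYJ cY.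
have [[indJ _] [indJ' kJ']] := (hF J FJ, hF J' FJ').
have [Z [sZJ' cZ XZ]] := connect_tj_move_across k_gt0 indJ indJ' capJJ' kJ' sXJ cX.
exact: connect_trans XZ (IHp J' FJ' Fp pathJ' Z Y sZJ' cZ sYJ cY).
Qed.

End TokenJumping.

Theorem lemma7p1 (V : finType) (e : rel V)
  (e_sym : symmetric e) (e_irr : irreflexive e)
  (k : nat) (hk : 1 <= k) (S T : {set V})
  (hS : independent e S) (hSk : #|S| = k)
  (hT : independent e T) (hTk : #|T| = k)
  (F : {set {set V}})
  (hF : forall I, I \in F -> independent e I /\ k <= #|I|)
  (hSF : S \in F) (hTF : T \in F) :
  (exists p : seq {set V},
     [/\ all (fun I => I \in F) p, path (@aux_adj V k) S p & last S p = T]) ->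
  tj_reconf e k S T.
Proof.
case=> p [Fp pathSp lastSp].
apply: tj_reconf_connect => //.
apply: (connect_tj_move_path hk hF hSF Fp pathSp (subxx S) hSk _ hTk).
by rewrite lastSp.
Qed.
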